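(* Let $f:X\to Y$ be an upper $K$-convex function, suppose $D_Y$ is $K$-closed, and let $\bar x\in X$. Then $$\widehat\partial f(\bar x)=\{T\in B(X,Y)\mid f(x)\in f(\bar x)+T(x-\bar x)+K\ \text{ for all } x\in X\}.$$ In particular, if $Y=\mathbb R$ and $K=[0,\infty)$, $\widehat\partial f(\bar x)$ coincides with the classical subdifferential of the convex function $f$ at $\bar x$.
   Context: $X,Y$ are real normed spaces; $B(X,Y)$ is the space of bounded linear operators $X\to Y$; $B(x,\delta)$ is the open ball and $D_Y$ the closed unit ball of $Y$. $K\subset Y$ is a pointed closed convex cone. For $f:X\to Y$ and $\bar x\in X$, $\widehat\partial f(\bar x)$ is the set of all $T\in B(X,Y)$ such that for every $\varepsilon>0$ there is $\delta>0$ with $f(x)+K\subset f(\bar x)+K+T(x-\bar x)+\varepsilon\|x-\bar x\|D_Y$ for all $x\in B(\bar x,\delta)$. $f$ is upper $K$-convex if $\lambda f(x)+(1-\lambda)f(y)\in f(\lambda x+(1-\lambda)y)+K$ for all $x,y\in X$, $\lambda\in(0,1)$. $D_Y$ is $K$-closed means $D_Y+K$ is closed. *)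

From HB Require Import structures.
From mathcomp Require Import all_boot all_order all_algebra.
From mathcomp Require Import all_classical all_reals all_analysis.
Set Implicit Arguments. Unset Strict Implicit. Unset Printing Implicit Defensive.
Import Order.TTheory GRing.Theory Num.Theory.
Import numFieldNormedType.Exports.
Local Open Scope classical_set_scope.
Local Open Scope ring_scope.

Section Defs.
Variables (R : realType) (X Y : normedModType R).

Definition bounded_linear (T : X -> Y) : Prop :=
  (forall (a : R) (u v : X), T (a *: u + v) = a *: T u + T v) /\
  exists M : R, forall u : X, `|T u| <= M * `|u|.

Definition pointed_closed_convex_cone (K : set Y) : Prop :=
  [/\ K 0,
      (forall (t : R) (k : Y), 0 <= t -> K k -> K (t *: k)),
      (forall (t : R) (k1 k2 : Y), 0 <= t <= 1 -> K k1 -> K k2 ->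
          K (t *: k1 + (1 - t) *: k2)),
      (forall k : Y, K k -> K (- k) -> k = 0)
    & closed K].

Definition unit_ball_K_closed (K : set Y) : Prop :=
  closed [set y : Y | exists d k, `|d| <= 1 /\ K k /\ y = d + k].

Definition upper_K_convex (K : set Y) (f : X -> Y) : Prop :=
  forall (x y : X) (l : R), 0 < l < 1 ->
    exists2 k, K k &
      l *: f x + (1 - l) *: f y = f (l *: x + (1 - l) *: y) + k.

(* T belongs to \hat\partial f(xb):  for every eps>0 there is delta>0 such that
   f(x)+K ⊆ f(xb)+K+T(x-xb)+eps||x-xb|| D_Y  for all x in B(xb,delta) *)
Definition frechet_K_subdiff (K : set Y) (f : X -> Y) (xb : X) : set (X -> Y) :=
  [set T | bounded_linear T /\
     forall eps : R, 0 < eps -> exists2 delta : R, 0 < delta &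
       forall x : X, `|x - xb| < delta ->
         forall k, K k -> exists2 k', K k' & exists2 d : Y, `|d| <= 1 &
           f x + k = f xb + k' + T (x - xb) + (eps * `|x - xb|) *: d].

End Defs.

From HB Require Import structures.
From mathcomp Require Import all_boot all_order all_algebra.
From mathcomp Require Import all_classical all_reals all_analysis.
From mathcomp Require Import ring lra.
Import Order.TTheory GRing.Theory Num.Theory.
Import numFieldNormedType.Exports.
Local Open Scope classical_set_scope.
Local Open Scope ring_scope.

(* If [T] lies in the Frechet K-subdifferential, apply its defining
   inequality at a point [xt := xb + t (x - xb)] of the segment towards [x],
   with [t] small, and compare with upper K-convexity along the same segment:
   this gives [t v = k + eps t |x - xb| d] with [k] in [K] and [|d| <= 1],
   where [v := f x - f xb - T (x - xb)].  Dividing by [t], [v] is within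
   [eps |x - xb|] of [K] for every [eps > 0], so [v] lies in the closed set
   [K].  The converse inclusion is immediate (take [d := 0]). *)

Lemma closed_mem_approx (R : realType) (V : normedModType R) (A : set V)
    (v : V) :
  closed A -> (forall e, 0 < e -> exists2 a, A a & `|v - a| <= e) -> A v.
Proof.
move=> clA approx; rewrite (closure_id A).1 //.
move=> B /nbhs_ballP[e /= e0 eB].
have [a Aa va] := approx (e / 2) (divr_gt0 e0 (ltr0Sn _ 1)).
exists a; split => //; apply: eB; rewrite -ball_normE /=.
by apply: le_lt_trans va _; rewrite ltr_pdivrMr //; lra.
Qed.

Lemma scalerBconvex {R : ringType} {V : lmodType R} (t : R) (x y : V) :
  t *: x + (1 - t) *: y - y = t *: (x - y).
Proof. by rewrite scalerBl scale1r scalerBr addrA addrAC addrK. Qed.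

Lemma cone_addr {R : realType} {Y : normedModType R} {K : set Y} :
  pointed_closed_convex_cone K -> forall a b, K a -> K b -> K (a + b).
Proof.
case=> _ Kscale Kconv _ _ a b Ka Kb.
have half01 : 0 <= (2^-1 : R) <= 1 by apply/andP; split; lra.
have /(Kscale 2) : K (2^-1 *: a + (1 - 2^-1) *: b) := Kconv _ _ _ half01 Ka Kb.
have -> : 1 - 2^-1 = 2^-1 :> R by lra.
rewrite ler0n => /(_ isT).
by rewrite scalerDr !scalerA divff ?pnatr_eq0 // !scale1r.
Qed.

Lemma bounded_linear0 {R : realType} {X Y : normedModType R} {T : X -> Y} :
  bounded_linear T -> T 0 = 0.
Proof.
case=> linT _; have := linT 1 0 0; rewrite !scale1r !addr0 => T0.
by apply: (@addrI _ (T 0)); rewrite addr0 -T0.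
Qed.

Lemma bounded_linearZ {R : realType} {X Y : normedModType R} {T : X -> Y} :
  bounded_linear T -> forall a u, T (a *: u) = a *: T u.
Proof.
move=> hT a u; have := hT.1 a u 0.
by rewrite !addr0 (bounded_linear0 hT) addr0.
Qed.

Section UpperConvexSubdiff.
Context {R : realType} {X Y : normedModType R} {K : set Y}.
Context {f : X -> Y} {xb : X} {T : X -> Y}.
Hypotheses (hK : pointed_closed_convex_cone K) (hf : upper_K_convex K f).
Hypothesis subT : frechet_K_subdiff K f xb T.

Lemma subdiff_defect_approx (x : X) (eps : R) : 0 < eps ->
  exists2 k, K k & `|f x - f xb - T (x - xb) - k| <= eps * `|x - xb|.
Proof.
move=> eps0; have [delta delta0 near_xb] := subT.2 eps eps0.
set c := `|x - xb|; set v := f x - f xb - T (x - xb).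
have c0 : 0 <= c := normr_ge0 _.
have c1 : 0 < c + 1 by lra.
(* [c + 1] rather than [c], so that the case [x = xb] needs no special care *)
pose t := Num.min 2^-1 (delta / (c + 1)).
have t0 : 0 < t by rewrite lt_min divr_gt0 // andbT; lra.
have t01 : 0 < t < 1 by rewrite t0 gt_min; apply/orP; left; lra.
have tc_delta : t * c < delta.
  have : t * (c + 1) <= delta by rewrite -ler_pdivlMr // ge_min lexx orbT.
  nra.
have [k1 Kk1 convex_xt] := hf x xb t t01.
set xt := t *: x + (1 - t) *: xb in convex_xt.
have xt_xb : xt - xb = t *: (x - xb) := scalerBconvex t x xb.
have [K0 Kscale _ _ _] := hK.
have [k' Kk' [d d1 subdiff_xt]] : exists2 k', K k' & exists2 d : Y, `|d| <= 1 &
    f xt = f xb + k' + t *: T (x - xb) + (eps * (t * c)) *: d.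
  have := near_xb xt; rewrite xt_xb normrZ gtr0_norm // => /(_ tc_delta _ K0).
  by rewrite addr0 -(bounded_linearZ subT.1).
have tv : t *: v = k' + k1 + (eps * (t * c)) *: d.
  have -> : t *: v = t *: f x + (1 - t) *: f xb - f xb - t *: T (x - xb).
    rewrite /v !scalerBr scalerBl scale1r addrA.
    by rewrite (addrAC (t *: f x + f xb)) addrK.
  rewrite convex_xt subdiff_xt.
  (* cancel [f xb] and [t *: T (x - xb)] *)
  by rewrite (ACl ((1*6)*(3*7)*(2*5*4)))%AC /= !subrr !add0r.
exists (t^-1 *: (k' + k1)).
  by apply: Kscale; [rewrite invr_ge0 ltW | exact: cone_addr].
have -> : v - t^-1 *: (k' + k1) = (eps * c) *: d.
  have tn0 : t != 0 by rewrite gt_eqF.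
  have -> : v = t^-1 *: (t *: v) by rewrite scalerA mulVf // scale1r.
  rewrite tv scalerDr addrAC subrr add0r scalerA.
  by congr (_ *: _); field.
rewrite normrZ ger0_norm; last by rewrite mulr_ge0 // ltW.
by rewrite ler_piMr // mulr_ge0 // ltW.
Qed.

End UpperConvexSubdiff.

Theorem mainTheorem5 (R : realType) (X Y : normedModType R) (K : set Y)
    (f : X -> Y) (xb : X) :
  pointed_closed_convex_cone K ->
  unit_ball_K_closed K ->
  upper_K_convex K f ->
  frechet_K_subdiff K f xb =
    [set T : X -> Y | bounded_linear T /\
       forall x : X, exists2 k, K k & f x = f xb + T (x - xb) + k].
Proof.
move=> hK _ hf; apply/seteqP; split=> T [linT subT]; split=> //.
- move=> x; exists (f x - f xb - T (x - xb)).
    apply: closed_mem_approx; first by case: hK.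
    move=> e e0; set c := `|x - xb|.
    have c1 : 0 < c + 1 := ltr_wpDl (normr_ge0 _) ltr01.
    have [k Kk defect_k] := subdiff_defect_approx hK hf (conj linT subT) x
      (e / (c + 1)) (divr_gt0 e0 c1).
    exists k => //; apply: le_trans defect_k _.
    by rewrite mulrAC ler_pdivrMr // mulrDr mulr1 lerDl ltW.
  by rewrite -[f x - _ - _]addrA -opprD addrC addNKr.
- move=> eps eps0; exists 1 => // x _ k Kk.
  have [k0 Kk0 ->] := subT x.
  exists (k0 + k); first exact: cone_addr.
  exists 0; first by rewrite normr0.
  by rewrite scaler0 addr0 (addrAC (f xb) (T _) k0) (addrAC _ (T _) k) addrA.
Qed.
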